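(* Let $\Omega=(0,1)^2$, let $N$ be an even positive integer, $h=1/N$, and let $\mathcal T_h=\{Q_{jk}\}_{j,k=1}^N$ be the uniform partition of $\Omega$ into squares $Q_{jk}=((j-1)h,jh)\times((k-1)h,kh)$. Let real coefficients $\xi_{jk},\eta_{jk}$ ($1\le j,k\le N-1$) be given and set $$\mathbf u_h=\sum_{j,k=1}^{N-1}\binom{\xi_{jk}}{\eta_{jk}}\phi_{jk}+\binom{1/2}{0}\Big[\sum_{j=1}^{N-1}\phi_{j,N}+\psi_{2,TL}+\psi_{2,TR}\Big],$$ with $\phi_{jk}$, $\psi_{2,TL}$, $\psi_{2,TR}$ as described in the context. Suppose that $$\sum_{Q\in\mathcal T_h}\int_Q(\nabla\cdot\mathbf u_h)\,q_h\,d\mathbf x=0\qquad\text{for all } q_h\in\widetilde{\mathscr P}_0^h .$$ Then $$\Big|\int_{Q_{jk}}\nabla\cdot\mathbf u_h\,d\mathbf x\Big|=h^3\qquad\text{for all } Q_{jk}\in\mathcal T_h,$$ and these integrals alternate in sign in a checkerboard pattern: there is a number $\gamma$ with $|\gamma|=h^3$ such that $\int_{Q_{jk}}\nabla\cdot\mathbf u_h\,d\mathbf x=\gamma$ whenever $j+k$ is even and $=-\gamma$ whenever $j+k$ is odd.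
   Context: Divergence and gradients are taken elementwise on each square $Q\in\mathcal T_h$. Nonconforming $P_1$ basis functions: for a vertex $V_{jk}=(jh,kh)$ with $1\le j\le N-1$, $1\le k\le N$, $\phi_{jk}$ is the function which on each square $Q\in\mathcal T_h$ is a polynomial of degree at most one, is supported on the (at most four) squares having $V_{jk}$ as a vertex, and on each such square takes the value $1$ at the midpoints of the two edges of that square having $V_{jk}$ as an endpoint and the value $0$ at the midpoints of the other two edges. (So for $k\le N-1$ these are the usual basis functions of the $P_1$-nonconforming quadrilateral space vanishing at boundary edge midpoints; $\phi_{j,N}$, attached to a vertex on the top side $y=1$, is supported on $Q_{j,N}\cup Q_{j+1,N}$ and equals $1$ at the top-edge midpoints $((j-\tfrac12)h,1)$, $((j+\tfrac12)h,1)$.) DSSY corner functions: on the reference square $\widehat Q=[-1,1]^2$ let $\theta(t)=t^2-\tfrac53 t^4$ and $\widehat\psi_2(\widehat x,\widehat y)=\tfrac14+\tfrac12\widehat y+\tfrac38\big(\theta(\widehat x)-\theta(\widehat y)\big)$, which equals $1$ at the edge midpoint $(0,1)$ and $0$ at the edge midpoints $(1,0),(-1,0),(0,-1)$. For a square $Q$ with center $c_Q$ let $F_Q(\widehat x,\widehat y)=c_Q+\tfrac h2(\widehat x,\widehat y)$. Then $\psi_{2,TL}=\widehat\psi_2\circ F_{Q_{1N}}^{-1}$ on $Q_{1N}$ and $0$ elsewhere, and $\psi_{2,TR}=\widehat\psi_2\circ F_{Q_{NN}}^{-1}$ on $Q_{NN}$ and $0$ elsewhere (the top-left and top-right corner squares).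 Pressure space: call $Q_{jk}$ red if $j+k$ is even and black if $j+k$ is odd, and let $\Omega^R,\Omega^B$ be the unions of red, respectively black, squares. $\widetilde{\mathscr P}_0^h$ is the space of functions that are constant on each $Q_{jk}$ and satisfy $\int_{\Omega^R}q_h\,d\mathbf x=0$ and $\int_{\Omega^B}q_h\,d\mathbf x=0$ (equivalently, the direct sum of the mean-zero piecewise constants supported on red squares and those supported on black squares; its dimension is $N^2-2$). *)

From Stdlib Require Import Reals Arith Bool.
From Coquelicot Require Import Coquelicot.
Open Scope R_scope.
Local Open Scope bool_scope.

Fixpoint sum1 (n : nat) (f : nat -> R) : R :=
  match n with
  | O => 0
  | S m => sum1 m f + f (S m)
  end.

Definition hN (N : nat) : R := / INR N.

(* Local reference coordinates on Q_{ab} = ((a-1)h, ah) x ((b-1)h, bh):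
   F_Q(xh,yh) = c_Q + h/2 (xh,yh), so xh = 2 (x - c_x)/h. *)
Definition locx (N a : nat) (x : R) : R := 2 * (x - (INR a - /2) * hN N) / hN N.
Definition locy (N b : nat) (y : R) : R := 2 * (y - (INR b - /2) * hN N) / hN N.

(* Position of grid index j relative to square index a:
   vertex column j is the right side (j = a, sign +1) or the left side
   (j = a-1, sign -1) of Q_{a.}, or not a side of it. *)
Definition side (j a : nat) : option R :=
  if Nat.eqb j a then Some 1 else if Nat.eqb (S j) a then Some (-1) else None.

(* Restriction to Q_{ab} of the nonconforming P1 basis function phi_{jk}
   attached to V_{jk} = (jh,kh), written as the polynomial (extended to R^2).
   In reference coordinates, with V_{jk} = corner (s,t) of [-1,1]^2, the unique
   affine function equal to 1 at midpoints (s,0),(0,t) and 0 at (-s,0),(0,-t)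
   is (1 + s xh + t yh)/2. It is 0 on squares not having V_{jk} as vertex. *)
Definition phiQ (N j k a b : nat) (x y : R) : R :=
  match side j a, side k b with
  | Some s, Some t => (1 + s * locx N a x + t * locy N b y) / 2
  | _, _ => 0
  end.

Definition theta (t : R) : R := t ^ 2 - 5 / 3 * t ^ 4.
Definition psi2hat (xh yh : R) : R := / 4 + / 2 * yh + 3 / 8 * (theta xh - theta yh).

Definition psiTLQ (N a b : nat) (x y : R) : R :=
  if andb (Nat.eqb a 1) (Nat.eqb b N) then psi2hat (locx N a x) (locy N b y) else 0.
Definition psiTRQ (N a b : nat) (x y : R) : R :=
  if andb (Nat.eqb a N) (Nat.eqb b N) then psi2hat (locx N a x) (locy N b y) else 0.

Definition uh1Q (N : nat) (xi : nat -> nat -> R) (a b : nat) (x y : R) : R :=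
  sum1 (N - 1) (fun j => sum1 (N - 1) (fun k => xi j k * phiQ N j k a b x y))
  + / 2 * (sum1 (N - 1) (fun j => phiQ N j N a b x y)
           + psiTLQ N a b x y + psiTRQ N a b x y).
Definition uh2Q (N : nat) (eta : nat -> nat -> R) (a b : nat) (x y : R) : R :=
  sum1 (N - 1) (fun j => sum1 (N - 1) (fun k => eta j k * phiQ N j k a b x y)).

Definition divQ (N : nat) (xi eta : nat -> nat -> R) (a b : nat) (x y : R) : R :=
  Derive (fun t => uh1Q N xi a b t y) x + Derive (fun t => uh2Q N eta a b x t) y.

Definition sqint (N a b : nat) (f : R -> R -> R) : R :=
  RInt (fun x => RInt (fun y => f x y) ((INR b - 1) * hN N) (INR b * hN N))
       ((INR a - 1) * hN N) (INR a * hN N).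

From Stdlib Require Import Reals Lia Lra.
From Coquelicot Require Import Coquelicot.
Open Scope R_scope.

(* On a square Q the divergence of u_h is a constant c_Q, coming from the P1 part,
   plus the x-derivative of the corner functions; as psi2hat is even in its first
   variable, the latter integrates to zero over Q, so that the integral of div u_h
   over Q is h^2 c_Q.  Testing the discrete condition with the difference of the
   indicators of two squares of the same colour shows that c_Q takes one value on
   red and one on black squares.  Summing c_Q against the weights 1 and (-1)^(a+b)
   is a discrete Green formula: the contributions of the interior basis functions
   telescope away and only the top functions phi_{j,N}, with coefficient 1/2,
   survive.  This gives c_red + c_black = 0 and c_red - c_black = -2h. *)

Lemma sum1_ext n f g :
  (forall i, (1 <= i <= n)%nat -> f i = g i) -> sum1 n f = sum1 n g.
Proof.
  induction n as [|n IH]; intros Hfg; simpl; [reflexivity|].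
  rewrite IH, Hfg; [reflexivity | lia | intros; apply Hfg; lia].
Qed.

Lemma sum1_plus n f g : sum1 n (fun i => f i + g i) = sum1 n f + sum1 n g.
Proof. induction n; simpl; [ring | rewrite IHn; ring]. Qed.

Lemma sum1_minus n f g : sum1 n (fun i => f i - g i) = sum1 n f - sum1 n g.
Proof. induction n; simpl; [ring | rewrite IHn; ring]. Qed.

Lemma sum1_scal n c f : sum1 n (fun i => c * f i) = c * sum1 n f.
Proof. induction n; simpl; [ring | rewrite IHn; ring]. Qed.

Lemma sum1_const n c : sum1 n (fun _ => c) = INR n * c.
Proof. induction n; simpl sum1; [simpl; ring | rewrite IHn, S_INR; ring]. Qed.

Lemma sum1_eq_zero n f : (forall i, (1 <= i <= n)%nat -> f i = 0) -> sum1 n f = 0.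
Proof. intros Hf; rewrite (sum1_ext n f (fun _ => 0)), sum1_const by exact Hf; ring. Qed.

Lemma sum1_comm n m f :
  sum1 n (fun a => sum1 m (fun b => f a b)) = sum1 m (fun b => sum1 n (fun a => f a b)).
Proof.
  induction n as [|n IH]; simpl.
  - rewrite sum1_const; simpl; ring.
  - rewrite IH, <- sum1_plus; reflexivity.
Qed.

Lemma sum1_sum1_plus n m f g :
  sum1 n (fun a => sum1 m (fun b => f a b + g a b))
  = sum1 n (fun a => sum1 m (fun b => f a b)) + sum1 n (fun a => sum1 m (fun b => g a b)).
Proof. rewrite <- sum1_plus; apply sum1_ext; intros; apply sum1_plus. Qed.

Lemma sum1_sum1_minus n m f g :
  sum1 n (fun a => sum1 m (fun b => f a b - g a b))
  = sum1 n (fun a => sum1 m (fun b => f a b)) - sum1 n (fun a => sum1 m (fun b => g a b)).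
Proof. rewrite <- sum1_minus; apply sum1_ext; intros; apply sum1_minus. Qed.

Lemma sum1_sum1_scal n m c f :
  sum1 n (fun a => sum1 m (fun b => c * f a b)) = c * sum1 n (fun a => sum1 m (fun b => f a b)).
Proof. rewrite <- sum1_scal; apply sum1_ext; intros; apply sum1_scal. Qed.

Lemma sum1_sum1_mul_sum1 n m p (w : nat -> nat -> R) F :
  sum1 n (fun a => sum1 m (fun b => w a b * sum1 p (fun j => F j a b)))
  = sum1 p (fun j => sum1 n (fun a => sum1 m (fun b => w a b * F j a b))).
Proof.
  transitivity (sum1 n (fun a => sum1 p (fun j => sum1 m (fun b => w a b * F j a b)))).
  - apply sum1_ext; intros a _; rewrite <- sum1_comm.
    apply sum1_ext; intros b _; symmetry; apply sum1_scal.
  - apply sum1_comm.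
Qed.

Lemma sum1_sum1_mul_sum1_sum1 n m p r (w c : nat -> nat -> R) F :
  sum1 n (fun a => sum1 m (fun b => w a b * sum1 p (fun j => sum1 r (fun k => c j k * F j k a b))))
  = sum1 p (fun j => sum1 r (fun k =>
      c j k * sum1 n (fun a => sum1 m (fun b => w a b * F j k a b)))).
Proof.
  rewrite sum1_sum1_mul_sum1; apply sum1_ext; intros j _.
  rewrite (sum1_sum1_mul_sum1 n m r w (fun k a b => c j k * F j k a b)).
  apply sum1_ext; intros k _; rewrite <- sum1_sum1_scal.
  apply sum1_ext; intros; apply sum1_ext; intros; ring.
Qed.

Definition kron (i j : nat) : R := if Nat.eqb i j then 1 else 0.

Lemma sum1_kron_out n c F : (n < c)%nat -> sum1 n (fun a => kron a c * F a) = 0.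
Proof.
  induction n as [|n IH]; intros Hc; simpl; [reflexivity|].
  rewrite IH by lia; unfold kron.
  replace (Nat.eqb (S n) c) with false by (symmetry; apply Nat.eqb_neq; lia); ring.
Qed.

Lemma sum1_kron n c F : (1 <= c <= n)%nat -> sum1 n (fun a => kron a c * F a) = F c.
Proof.
  induction n as [|n IH]; intros Hc; [lia|]; simpl; unfold kron at 2.
  destruct (Nat.eqb_spec (S n) c) as [<-|Hne].
  - rewrite sum1_kron_out by lia; ring.
  - rewrite IH by lia; ring.
Qed.

Lemma sum1_sum1_kron n a0 b0 g :
  (1 <= a0 <= n)%nat -> (1 <= b0 <= n)%nat ->
  sum1 n (fun a => sum1 n (fun b => kron a a0 * kron b b0 * g a b)) = g a0 b0.
Proof.
  intros Ha Hb.
  rewrite (sum1_ext n _ (fun a => kron a a0 * g a b0));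
    [exact (sum1_kron n a0 (fun a => g a b0) Ha) |].
  intros a _; rewrite <- (sum1_kron n b0 (fun b => kron a a0 * g a b)) by lia.
  apply sum1_ext; intros; ring.
Qed.

Lemma even_S n : Nat.even (S n) = negb (Nat.even n).
Proof. rewrite Nat.even_succ, <- Nat.negb_even; reflexivity. Qed.

Lemma sum1_parity m a (u v : R) :
  sum1 (2 * m) (fun b => if Nat.even (a + b) then u else v) = INR m * (u + v).
Proof.
  induction m as [|m IH]; [simpl; ring|].
  replace (2 * S m)%nat with (S (S (2 * m))) by lia; cbn [sum1].
  rewrite IH, S_INR, !Nat.add_succ_r, !even_S.
  destruct (Nat.even (a + 2 * m)); simpl; ring.
Qed.

Lemma sum1_alternating m : sum1 (2 * m + 1) (fun j => if Nat.even j then 1 else -1) = -1.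
Proof.
  induction m as [|m IH]; [simpl; ring|].
  replace (2 * S m + 1)%nat with (S (S (2 * m + 1))) by lia; cbn [sum1].
  rewrite IH; replace (2 * m + 1)%nat with (S (2 * m)) by lia.
  rewrite !even_S, Nat.even_mul; simpl; ring.
Qed.

Definition side_sign (j a : nat) : R := match side j a with Some s => s | None => 0 end.
Definition side_ind (j a : nat) : R := match side j a with Some _ => 1 | None => 0 end.

Lemma side_sign_kron j a : side_sign j a = kron a j - kron a (S j).
Proof.
  unfold side_sign, side, kron.
  destruct (Nat.eqb_spec j a), (Nat.eqb_spec a j), (Nat.eqb_spec (S j) a),
    (Nat.eqb_spec a (S j)); subst; try lia; ring.
Qed.

Lemma side_ind_kron j a : side_ind j a = kron a j + kron a (S j).
Proof.
  unfold side_ind, side, kron.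
  destruct (Nat.eqb_spec j a), (Nat.eqb_spec a j), (Nat.eqb_spec (S j) a),
    (Nat.eqb_spec a (S j)); subst; try lia; ring.
Qed.

Lemma sum1_side_sign n j F :
  (1 <= j)%nat -> (S j <= n)%nat -> sum1 n (fun a => side_sign j a * F a) = F j - F (S j).
Proof.
  intros.
  rewrite (sum1_ext n _ (fun a => kron a j * F a - kron a (S j) * F a)).
  - rewrite sum1_minus, !sum1_kron by lia; reflexivity.
  - intros; rewrite side_sign_kron; ring.
Qed.

Lemma sum1_side_ind n j F :
  (1 <= j)%nat -> (S j <= n)%nat -> sum1 n (fun a => side_ind j a * F a) = F j + F (S j).
Proof.
  intros.
  rewrite (sum1_ext n _ (fun a => kron a j * F a + kron a (S j) * F a)).
  - rewrite sum1_plus, !sum1_kron by lia; reflexivity.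
  - intros; rewrite side_ind_kron; ring.
Qed.

Lemma sum1_side_ind_last n F : (1 <= n)%nat -> sum1 n (fun a => side_ind n a * F a) = F n.
Proof.
  intros.
  rewrite (sum1_ext n _ (fun a => kron a n * F a + kron a (S n) * F a)).
  - rewrite sum1_plus, sum1_kron, sum1_kron_out by lia; ring.
  - intros; rewrite side_ind_kron; ring.
Qed.

Lemma sum1_sum1_mul_separate n (w : nat -> nat -> R) f g c :
  sum1 n (fun a => sum1 n (fun b => w a b * (f a * g b / c)))
  = sum1 n (fun a => f a * sum1 n (fun b => g b * w a b)) / c.
Proof.
  unfold Rdiv; rewrite Rmult_comm, <- sum1_scal.
  apply sum1_ext; intros a _; rewrite <- sum1_scal, <- sum1_scal.
  apply sum1_ext; intros; ring.
Qed.

Lemma hN_pos N : (0 < N)%nat -> 0 < hN N.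
Proof. intros; apply Rinv_0_lt_compat, lt_0_INR; assumption. Qed.

Lemma is_derive_Rplus (f g : R -> R) x df dg :
  is_derive f x df -> is_derive g x dg -> is_derive (fun t => f t + g t) x (df + dg).
Proof. exact (is_derive_plus f g x df dg). Qed.

Lemma is_derive_sum1 n (f : nat -> R -> R) df x :
  (forall i, is_derive (f i) x (df i)) ->
  is_derive (fun t => sum1 n (fun i => f i t)) x (sum1 n df).
Proof.
  intros Hf; induction n as [|n IH]; simpl.
  - exact (is_derive_const 0 x).
  - exact (is_derive_plus _ (f (S n)) x _ _ IH (Hf (S n))).
Qed.

Definition dphi_dx (N j k a b : nat) : R := side_sign j a * side_ind k b / hN N.
Definition dphi_dy (N j k a b : nat) : R := side_ind j a * side_sign k b / hN N.

Lemma is_derive_phiQ_x N j k a b x y :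
  is_derive (fun t => phiQ N j k a b t y) x (dphi_dx N j k a b).
Proof.
  unfold phiQ, dphi_dx, side_sign, side_ind, locx, locy.
  destruct (side j a), (side k b); auto_derive; trivial.
  (* [/ hN N = INR N], so no hypothesis [N <> 0] is needed. *)
  all: unfold hN, Rdiv; rewrite ?Rinv_inv; field.
Qed.

Lemma is_derive_phiQ_y N j k a b x y :
  is_derive (fun t => phiQ N j k a b x t) y (dphi_dy N j k a b).
Proof.
  unfold phiQ, dphi_dy, side_sign, side_ind, locx, locy.
  destruct (side j a), (side k b); auto_derive; trivial.
  all: unfold hN, Rdiv; rewrite ?Rinv_inv; field.
Qed.

Definition dtheta (t : R) : R := 2 * t - 20 / 3 * t ^ 3.

Lemma is_derive_psi2hat_locx N a x yh :
  is_derive (fun t => psi2hat (locx N a t) yh) x (3 / 8 * dtheta (locx N a x) * (2 / hN N)).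
Proof.
  unfold psi2hat, theta, dtheta, locx; auto_derive; trivial.
  unfold hN, Rdiv; rewrite Rinv_inv; ring.
Qed.

Lemma psi2hat_even xh yh : psi2hat (- xh) yh = psi2hat xh yh.
Proof. unfold psi2hat, theta; ring. Qed.

Definition corner_count (N a b : nat) : R :=
  (if andb (Nat.eqb a 1) (Nat.eqb b N) then 1 else 0)
  + (if andb (Nat.eqb a N) (Nat.eqb b N) then 1 else 0).

Lemma psiTLQ_plus_psiTRQ N a b x y :
  psiTLQ N a b x y + psiTRQ N a b x y = corner_count N a b * psi2hat (locx N a x) (locy N b y).
Proof.
  unfold psiTLQ, psiTRQ, corner_count.
  destruct (andb (Nat.eqb a 1) (Nat.eqb b N)), (andb (Nat.eqb a N) (Nat.eqb b N)); ring.
Qed.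

Definition corner_dx (N a b : nat) (x : R) : R :=
  corner_count N a b * (3 / 8 * dtheta (locx N a x) * (2 / hN N)).

Definition div_const (N : nat) (xi eta : nat -> nat -> R) (a b : nat) : R :=
  sum1 (N - 1) (fun j => sum1 (N - 1) (fun k => xi j k * dphi_dx N j k a b))
  + / 2 * sum1 (N - 1) (fun j => dphi_dx N j N a b)
  + sum1 (N - 1) (fun j => sum1 (N - 1) (fun k => eta j k * dphi_dy N j k a b)).

Lemma is_derive_uh1Q_x N xi a b x y :
  is_derive (fun t => uh1Q N xi a b t y) x
    (sum1 (N - 1) (fun j => sum1 (N - 1) (fun k => xi j k * dphi_dx N j k a b))
     + / 2 * (sum1 (N - 1) (fun j => dphi_dx N j N a b) + corner_dx N a b x)).
Proof.
  assert (Huh1 : forall t,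
    sum1 (N - 1) (fun j => sum1 (N - 1) (fun k => xi j k * phiQ N j k a b t y))
    + / 2 * (sum1 (N - 1) (fun j => phiQ N j N a b t y)
             + corner_count N a b * psi2hat (locx N a t) (locy N b y))
    = uh1Q N xi a b t y).
  { intro t; unfold uh1Q; rewrite <- psiTLQ_plus_psiTRQ; ring. }
  apply (is_derive_ext _ _ _ _ Huh1), is_derive_Rplus.
  - apply is_derive_sum1; intro j; apply is_derive_sum1; intro k.
    apply is_derive_scal, is_derive_phiQ_x.
  - apply is_derive_scal, is_derive_Rplus.
    + apply is_derive_sum1; intro j; apply is_derive_phiQ_x.
    + apply is_derive_scal, is_derive_psi2hat_locx.
Qed.

Lemma is_derive_uh2Q_y N eta a b x y :
  is_derive (fun t => uh2Q N eta a b x t) y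
    (sum1 (N - 1) (fun j => sum1 (N - 1) (fun k => eta j k * dphi_dy N j k a b))).
Proof.
  apply is_derive_sum1; intro j; apply is_derive_sum1; intro k.
  apply is_derive_scal, is_derive_phiQ_y.
Qed.

Lemma divQ_eq N xi eta a b x y :
  divQ N xi eta a b x y = div_const N xi eta a b + / 2 * corner_dx N a b x.
Proof.
  unfold divQ, div_const.
  rewrite (is_derive_unique (fun t : R => uh1Q N xi a b t y) x _ (is_derive_uh1Q_x N xi a b x y)),
    (is_derive_unique (fun t : R => uh2Q N eta a b x t) y _ (is_derive_uh2Q_y N eta a b x y)).
  ring.
Qed.

Lemma RInt_const_plus_derive (K : R) (G g : R -> R) (u v : R) :
  (forall x, is_derive G x (g x)) -> (forall x, continuous g x) -> G u = G v ->
  RInt (fun x => K + g x) u v = K * (v - u).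
Proof.
  intros HG Hg Huv; apply is_RInt_unique.
  replace (K * (v - u)) with (minus (K * v + G v) (K * u + G u))
    by (unfold minus, plus, opp; simpl; rewrite Huv; ring).
  apply (is_RInt_derive (fun x => K * x + G x)); intros x _.
  - replace (K + g x) with (K * 1 + g x) by ring.
    apply is_derive_Rplus; [apply is_derive_scal, (is_derive_id (K := R_AbsRing)) | apply HG].
  - exact (continuous_plus (fun _ => K) g x (continuous_const K x) (Hg x)).
Qed.

Lemma locx_left N a : locx N a ((INR a - 1) * hN N) = - locx N a (INR a * hN N).
Proof.
  unfold locx, Rdiv; replace (INR a - 1) with (INR a - / 2 - / 2) by field; ring.
Qed.

Lemma sqint_divQ_mul N xi eta a b c :
  sqint N a b (fun x y => divQ N xi eta a b x y * c) = hN N ^ 2 * div_const N xi eta a b * c.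
Proof.
  set (h := hN N).
  unfold sqint; fold h.
  rewrite (RInt_ext _ (fun x => h * c * div_const N xi eta a b + h * c * (/ 2 * corner_dx N a b x))).
  2: { intros x _.
       rewrite (RInt_ext _ (fun _ => (div_const N xi eta a b + / 2 * corner_dx N a b x) * c))
         by (intros; rewrite divQ_eq; reflexivity).
       rewrite RInt_const; unfold scal; simpl; unfold mult; simpl; fold h; ring. }
  (* [x |-> psi2hat (locx N a x) 0] is an antiderivative of the corner part. *)
  rewrite (RInt_const_plus_derive _
    (fun x => h * c * (/ 2 * (corner_count N a b * psi2hat (locx N a x) 0)))).
  - ring.
  - intro x; unfold corner_dx.
    apply is_derive_scal, is_derive_scal, is_derive_scal, is_derive_psi2hat_locx.
  - intro x; apply (ex_derive_continuous (K := R_AbsRing) (V := R_NormedModule)).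
    unfold corner_dx, dtheta, locx; auto_derive; trivial.
  - rewrite locx_left, psi2hat_even; reflexivity.
Qed.

Lemma sqint_divQ N xi eta a b :
  sqint N a b (divQ N xi eta a b) = hN N ^ 2 * div_const N xi eta a b.
Proof.
  rewrite <- (Rmult_1_r (_ * _)), <- sqint_divQ_mul.
  unfold sqint; apply RInt_ext; intros; apply RInt_ext; intros; symmetry; apply Rmult_1_r.
Qed.

Lemma sqint_const N a b c : sqint N a b (fun _ _ => c) = hN N ^ 2 * c.
Proof.
  unfold sqint; rewrite (RInt_ext _ (fun _ => hN N * c)).
  - rewrite RInt_const; unfold scal; simpl; unfold mult; simpl; ring.
  - intros; rewrite RInt_const; unfold scal; simpl; unfold mult; simpl; ring.
Qed.

Lemma sum1_sum1_dphi_dx N w j k :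
  (1 <= j)%nat -> (S j <= N)%nat -> (1 <= k)%nat -> (S k <= N)%nat ->
  sum1 N (fun a => sum1 N (fun b => w a b * dphi_dx N j k a b))
  = (w j k + w j (S k) - w (S j) k - w (S j) (S k)) / hN N.
Proof.
  intros; unfold dphi_dx; rewrite sum1_sum1_mul_separate.
  rewrite (sum1_ext N _ (fun a => side_sign j a * (w a k + w a (S k))))
    by (intros a _; rewrite (sum1_side_ind N k (w a)) by lia; reflexivity).
  rewrite (sum1_side_sign N j (fun a => w a k + w a (S k))) by lia.
  unfold Rdiv; ring.
Qed.

Lemma sum1_sum1_dphi_dy N w j k :
  (1 <= j)%nat -> (S j <= N)%nat -> (1 <= k)%nat -> (S k <= N)%nat ->
  sum1 N (fun a => sum1 N (fun b => w a b * dphi_dy N j k a b))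
  = (w j k - w j (S k) + w (S j) k - w (S j) (S k)) / hN N.
Proof.
  intros; unfold dphi_dy; rewrite sum1_sum1_mul_separate.
  rewrite (sum1_ext N _ (fun a => side_ind j a * (w a k - w a (S k))))
    by (intros a _; rewrite (sum1_side_sign N k (w a)) by lia; reflexivity).
  rewrite (sum1_side_ind N j (fun a => w a k - w a (S k))) by lia.
  unfold Rdiv; ring.
Qed.

Lemma sum1_sum1_dphi_dx_top N w j :
  (1 <= j)%nat -> (S j <= N)%nat ->
  sum1 N (fun a => sum1 N (fun b => w a b * dphi_dx N j N a b)) = (w j N - w (S j) N) / hN N.
Proof.
  intros; unfold dphi_dx; rewrite sum1_sum1_mul_separate.
  rewrite (sum1_ext N _ (fun a => side_sign j a * w a N))
    by (intros a _; rewrite (sum1_side_ind_last N (w a)) by lia; reflexivity).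
  rewrite (sum1_side_sign N j (fun a => w a N)) by lia.
  reflexivity.
Qed.

Lemma sum1_sum1_weighted_div_const N xi eta (w : nat -> nat -> R) :
  (2 <= N)%nat ->
  (forall a b, w a b + w a (S b) = w (S a) b + w (S a) (S b)) ->
  (forall a b, w a b + w (S a) b = w a (S b) + w (S a) (S b)) ->
  sum1 N (fun a => sum1 N (fun b => w a b * div_const N xi eta a b))
  = / 2 * sum1 (N - 1) (fun j => (w j N - w (S j) N) / hN N).
Proof.
  intros HN Hrow Hcol; unfold div_const.
  rewrite (sum1_ext N _ (fun a => sum1 N (fun b =>
      w a b * sum1 (N - 1) (fun j => sum1 (N - 1) (fun k => xi j k * dphi_dx N j k a b))
      + / 2 * (w a b * sum1 (N - 1) (fun j => dphi_dx N j N a b))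
      + w a b * sum1 (N - 1) (fun j => sum1 (N - 1) (fun k => eta j k * dphi_dy N j k a b)))))
    by (intros; apply sum1_ext; intros; ring).
  rewrite !sum1_sum1_plus, sum1_sum1_scal,
    (sum1_sum1_mul_sum1_sum1 N N (N - 1) (N - 1) w xi (dphi_dx N)),
    (sum1_sum1_mul_sum1_sum1 N N (N - 1) (N - 1) w eta (dphi_dy N)),
    (sum1_sum1_mul_sum1 N N (N - 1) w (fun j => dphi_dx N j N)).
  rewrite (sum1_eq_zero (N - 1) (fun j => sum1 (N - 1) (fun k => xi j k * _))).
  2: { intros j Hj; apply sum1_eq_zero; intros k Hk.
       rewrite sum1_sum1_dphi_dx by lia.
       replace (w j k + w j (S k) - w (S j) k - w (S j) (S k)) with 0
         by (pose proof (Hrow j k); lra).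
       unfold Rdiv; ring. }
  rewrite (sum1_eq_zero (N - 1) (fun j => sum1 (N - 1) (fun k => eta j k * _))).
  2: { intros j Hj; apply sum1_eq_zero; intros k Hk.
       rewrite sum1_sum1_dphi_dy by lia.
       replace (w j k - w j (S k) + w (S j) k - w (S j) (S k)) with 0
         by (pose proof (Hcol j k); lra).
       unfold Rdiv; ring. }
  rewrite (sum1_ext (N - 1) _ (fun j => (w j N - w (S j) N) / hN N))
    by (intros; apply sum1_sum1_dphi_dx_top; lia).
  ring.
Qed.

Definition weakly_divergence_free (N : nat) (xi eta : nat -> nat -> R) : Prop :=
  forall q : nat -> nat -> R,
    sum1 N (fun a => sum1 N (fun b =>
      if Nat.even (a + b) then sqint N a b (fun _ _ => q a b) else 0)) = 0 ->
    sum1 N (fun a => sum1 N (fun b =>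
      if Nat.even (a + b) then 0 else sqint N a b (fun _ _ => q a b))) = 0 ->
    sum1 N (fun a => sum1 N (fun b =>
      sqint N a b (fun x y => divQ N xi eta a b x y * q a b))) = 0.

Lemma div_const_same_colour N xi eta a1 b1 a2 b2 :
  (0 < N)%nat -> weakly_divergence_free N xi eta ->
  (1 <= a1 <= N)%nat -> (1 <= b1 <= N)%nat -> (1 <= a2 <= N)%nat -> (1 <= b2 <= N)%nat ->
  Nat.even (a1 + b1) = Nat.even (a2 + b2) ->
  div_const N xi eta a1 b1 = div_const N xi eta a2 b2.
Proof.
  intros HN Hdiv Ha1 Hb1 Ha2 Hb2 Hcolour.
  set (q := fun a b => kron a a1 * kron b b1 - kron a a2 * kron b b2).
  assert (Hq : forall f g, (forall a b, f a b = g a b * q a b) ->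
            sum1 N (fun a => sum1 N (fun b => f a b)) = g a1 b1 - g a2 b2).
  { intros f g Hfg.
    rewrite (sum1_ext N _ (fun a => sum1 N (fun b =>
        kron a a1 * kron b b1 * g a b - kron a a2 * kron b b2 * g a b)))
      by (intros; apply sum1_ext; intros; rewrite Hfg; unfold q; ring).
    rewrite sum1_sum1_minus, !sum1_sum1_kron by lia; reflexivity. }
  assert (Hcells := Hq (fun a b => sqint N a b (fun x y => divQ N xi eta a b x y * q a b))
                       (fun a b => hN N ^ 2 * div_const N xi eta a b)
                       (fun a b => sqint_divQ_mul N xi eta a b (q a b))).
  cbv beta in Hcells; rewrite Hdiv in Hcells.
  - apply (Rmult_eq_reg_l (hN N ^ 2)); [lra | apply pow_nonzero, Rgt_not_eq, hN_pos, HN].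
  - rewrite (Hq _ (fun a b => if Nat.even (a + b) then hN N ^ 2 else 0)), Hcolour; [ring|].
    intros; rewrite sqint_const; destruct (Nat.even (a + b)); ring.
  - rewrite (Hq _ (fun a b => if Nat.even (a + b) then 0 else hN N ^ 2)), Hcolour; [ring|].
    intros; rewrite sqint_const; destruct (Nat.even (a + b)); ring.
Qed.

Lemma div_const_checkerboard N xi eta :
  (0 < N)%nat -> Nat.Even N -> weakly_divergence_free N xi eta ->
  forall a b, (1 <= a <= N)%nat -> (1 <= b <= N)%nat ->
  div_const N xi eta a b
  = if Nat.even (a + b) then div_const N xi eta 1 1 else div_const N xi eta 1 2.
Proof.
  intros HN [m Hm] Hdiv a b Ha Hb.
  destruct (Nat.even (a + b)) eqn:Hab;
    apply div_const_same_colour; try assumption; try lia; rewrite Hab; reflexivity.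
Qed.

Definition chess_sign (a b : nat) : R := if Nat.even (a + b) then 1 else -1.

Lemma chess_sign_succ_l a b : chess_sign (S a) b = - chess_sign a b.
Proof.
  unfold chess_sign; simpl (S a + b)%nat.
  rewrite even_S; destruct (Nat.even (a + b)); simpl; ring.
Qed.

Lemma chess_sign_succ_r a b : chess_sign a (S b) = - chess_sign a b.
Proof.
  unfold chess_sign; rewrite Nat.add_succ_r, even_S.
  destruct (Nat.even (a + b)); simpl; ring.
Qed.

Lemma sum1_sum1_mul_checkerboard m (d w : nat -> nat -> R) al be u v :
  (forall a b, (1 <= a <= 2 * m)%nat -> (1 <= b <= 2 * m)%nat ->
     d a b = if Nat.even (a + b) then al else be) ->
  (forall a b, w a b * (if Nat.even (a + b) then al else be)
               = if Nat.even (a + b) then u else v) ->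
  sum1 (2 * m) (fun a => sum1 (2 * m) (fun b => w a b * d a b)) = INR (2 * m) * (INR m * (u + v)).
Proof.
  intros Hd Hw; rewrite <- sum1_const.
  apply sum1_ext; intros a Ha; rewrite <- (sum1_parity m a).
  apply sum1_ext; intros b Hb; rewrite Hd by lia; apply Hw.
Qed.

Lemma checkerboard_values N xi eta al be :
  (0 < N)%nat -> Nat.Even N ->
  (forall a b, (1 <= a <= N)%nat -> (1 <= b <= N)%nat ->
     div_const N xi eta a b = if Nat.even (a + b) then al else be) ->
  al = - hN N /\ be = hN N.
Proof.
  intros HN [m ->] Hcb.
  assert (Hplus : INR (2 * m) * (INR m * (al + be)) = 0).
  { rewrite <- (sum1_sum1_mul_checkerboard m _ (fun _ _ => 1) al be al be Hcb)
      by (intros; destruct (Nat.even (a + b)); ring).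
    rewrite sum1_sum1_weighted_div_const by (lia || intros; ring).
    rewrite sum1_eq_zero by (intros; unfold Rdiv; ring); ring. }
  assert (Hminus : INR (2 * m) * (INR m * (al - be)) = - / hN (2 * m)).
  { unfold Rminus; rewrite <- (sum1_sum1_mul_checkerboard m _ chess_sign al be al (- be) Hcb)
      by (intros; unfold chess_sign; destruct (Nat.even (a + b)); ring).
    rewrite sum1_sum1_weighted_div_const;
      [| lia | intros; rewrite !chess_sign_succ_l, !chess_sign_succ_r; ring ..].
    rewrite (sum1_ext (2 * m - 1) _ (fun j => 2 / hN (2 * m) * (if Nat.even j then 1 else -1))).
    - replace (2 * m - 1)%nat with (2 * (m - 1) + 1)%nat by lia.
      rewrite sum1_scal, sum1_alternating; field; apply Rgt_not_eq, hN_pos, HN.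
    - intros j _; rewrite chess_sign_succ_l; unfold chess_sign.
      rewrite Nat.even_add_mul_2; destruct (Nat.even j); unfold Rdiv; ring. }
  unfold hN in *; rewrite Rinv_inv, mult_INR in *; simpl (INR 2) in *.
  assert (Hm0 : 0 < INR m) by (apply lt_0_INR; lia).
  assert (Hsum : al + be = 0) by (apply (Rmult_eq_reg_l (2 * INR m * INR m)); nra).
  assert (Hdiff : al - be = - / INR m)
    by (apply (Rmult_eq_reg_l (2 * INR m * INR m)); [field_simplify; nra | nra]).
  split; [replace al with ((al + be + (al - be)) / 2) by field
         | replace be with ((al + be - (al - be)) / 2) by field];
    rewrite Hsum, Hdiff; field; lra.
Qed.

Theorem theorem4p1 (N : nat) (xi eta : nat -> nat -> R) :
  (0 < N)%nat -> Nat.Even N ->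
  (* discrete divergence-free condition against all q_h in tilde P_0^h,
     q_h = q a b on Q_{ab} *)
  (forall q : nat -> nat -> R,
     sum1 N (fun a => sum1 N (fun b =>
       if Nat.even (a + b) then sqint N a b (fun _ _ => q a b) else 0)) = 0 ->
     sum1 N (fun a => sum1 N (fun b =>
       if Nat.even (a + b) then 0 else sqint N a b (fun _ _ => q a b))) = 0 ->
     sum1 N (fun a => sum1 N (fun b =>
       sqint N a b (fun x y => divQ N xi eta a b x y * q a b))) = 0) ->
  (forall j k, (1 <= j <= N)%nat -> (1 <= k <= N)%nat ->
     Rabs (sqint N j k (divQ N xi eta j k)) = hN N ^ 3) /\
  (exists gamma : R, Rabs gamma = hN N ^ 3 /\
     forall j k, (1 <= j <= N)%nat -> (1 <= k <= N)%nat ->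
       sqint N j k (divQ N xi eta j k) =
         (if Nat.even (j + k) then gamma else - gamma)).
Proof.
  intros HN HE Hdiv.
  pose proof (div_const_checkerboard N xi eta HN HE Hdiv) as Hcb.
  destruct (checkerboard_values N xi eta _ _ HN HE Hcb) as [Hred Hblack].
  assert (Hcell : forall j k, (1 <= j <= N)%nat -> (1 <= k <= N)%nat ->
    sqint N j k (divQ N xi eta j k) = if Nat.even (j + k) then - hN N ^ 3 else hN N ^ 3).
  { intros j k Hj Hk; rewrite sqint_divQ, Hcb by assumption.
    destruct (Nat.even (j + k)); [rewrite Hred | rewrite Hblack]; ring. }
  assert (Habs : Rabs (hN N ^ 3) = hN N ^ 3)
    by (apply Rabs_pos_eq, pow_le, Rlt_le, hN_pos, HN).
  split.
  - intros j k Hj Hk; rewrite Hcell by assumption.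
    destruct (Nat.even (j + k)); rewrite ?Rabs_Ropp; exact Habs.
  - exists (- hN N ^ 3); split; [rewrite Rabs_Ropp; exact Habs |].
    intros j k Hj Hk; rewrite Hcell by assumption.
    destruct (Nat.even (j + k)); ring.
Qed.
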